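(* Let $S\subseteq 2^E$ be a powerful set and $e\in E$. Then $|S/e|=|S|/2^{r_S(\{e\})}$. If moreover $e$ is deletable, then $|S\setminus e|=\frac12|S|$ if $e$ is a coloop of $S$, and $|S\setminus e|=|S|$ otherwise.
   Context: A set $S\subseteq 2^E$ ($E$ finite) is powerful if for every $X\subseteq E$ the number of members of $S$ contained in $X$ is a power of 2. Its rank function is $r_S(X)=\log_2\big(|S|/|\{Y\in S:Y\subseteq E\setminus X\}|\big)$. The contraction is $S/e=\{X\subseteq E\setminus\{e\}: X\in S\}$. Let $f$ be the $\{0,1\}$-valued indicator function of $S$ and $g(X)=f(X)+f(X\cup\{e\})$ for $X\subseteq E\setminus\{e\}$. The element $e$ is deletable if $\frac{1}{g(\emptyset)}g$ is $\{0,1\}$-valued (i.e. the multiset deletion of $e$ is, up to scaling, a powerful set); in that case $S\setminus e=\{X\subseteq E\setminus\{e\}: X\in S \text{ or } X\cup\{e\}\in S\}$. An element $e$ is a coloop of $S$ if there exists $T\subseteq 2^{E\setminus\{e\}}$ with $S=\{X,X\cup\{e\}:X\in T\}$. *)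

From mathcomp Require Import ssreflect ssrfun ssrbool eqtype ssrnat seq choice fintype div prime finset.
Set Implicit Arguments. Unset Strict Implicit. Unset Printing Implicit Defensive.

Section Powerful.
Variable E : finType.
Implicit Types (S : {set {set E}}) (X : {set E}) (e : E).

Definition below S X : {set {set E}} := [set Y in S | Y \subset X].

Definition powerful S : Prop := forall X, exists k, #|below S X| = 2 ^ k.

(* r_S(X) = log2 (|S| / |{Y in S : Y ⊆ E \ X}|); for powerful S the
   quotient is an exact power of 2, so log2 is exact. *)
Definition rankS S X : nat := trunc_log 2 (#|S| %/ #|below S (~: X)|).

Definition contraction S e : {set {set E}} := [set X in S | e \notin X].

Definition indS S X : nat := (X \in S).
Definition gdel S e X : nat := indS S X + indS S (X :|: [set e]).

(* e deletable: g / g(∅) is {0,1}-valued on subsets of E - e *)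
Definition deletable S e : Prop :=
  forall X, e \notin X -> gdel S e X = 0 \/ gdel S e X = gdel S e set0.

Definition deletion S e : {set {set E}} :=
  [set X : {set E} | (e \notin X) && ((X \in S) || (X :|: [set e] \in S))].

Definition coloop S e : Prop :=
  exists T : {set {set E}}, (forall X, X \in T -> e \notin X) /\
    S = T :|: [set (X :|: [set e]) | X in T].

End Powerful.

From mathcomp Require Import ssreflect ssrfun ssrbool eqtype ssrnat seq choice fintype div prime finset.

Set Implicit Arguments.
Unset Strict Implicit.
Unset Printing Implicit Defensive.

(* Since [S/e] consists of the members of [S] below [E - e], the contraction
   formula is the quotient of two powers of 2. For deletion, [set0 \in S]
   gives [g(set0) = 1 + ({e} \in S)]. If [{e} \in S], deletability makes [S]
   closed under adding and removing [e], so [e] is a coloop; for a coloop,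
   [S \ e] is the set [T] of the definition and [|S| = 2|T|]. If [{e} \notin S],
   no [X] and [X + e] are both in [S], so [Y |-> Y - e] is injective on [S]
   and its image is [S \ e]. *)

Lemma expn_trunc_log_divn p a b : 1 < p -> b <= a ->
  p ^ b * p ^ trunc_log p (p ^ a %/ p ^ b) = p ^ a.
Proof.
by move=> p_gt1 le_ba; rewrite -expnB ?trunc_expnK ?(ltnW p_gt1) // -expnD subnKC.
Qed.

Section Powerful.
Variable E : finType.
Implicit Types (S T : {set {set E}}) (X Y : {set E}) (e : E).

Lemma setUs1K e X : e \notin X -> (X :|: [set e]) :\ e = X.
Proof. by move=> eX; rewrite setUC setU1K. Qed.

Lemma setD1_id e X : e \notin X -> X :\ e = X.
Proof. by move=> eX; apply/setP=> x; rewrite !inE; case: eqP => // ->; rewrite (negbTE eX). Qed.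

Lemma setD1_eq_setUs1 e X Y : X :\ e = Y :\ e -> e \in X -> e \notin Y ->
  X = Y :|: [set e].
Proof. by move=> eqXY eX eY; rewrite -(setD1K eX) eqXY setD1_id // setUC. Qed.

Lemma mem_imset_setUs1 e T Y : Y \in [set X :|: [set e] | X in T] -> e \in Y.
Proof. by case/imsetP=> X _ ->; rewrite !inE eqxx orbT. Qed.

Lemma below_setT S : below S setT = S.
Proof. by apply/setP=> X; rewrite !inE subsetT andbT. Qed.

Lemma contraction_below S e : contraction S e = below S (~: [set e]).
Proof. by apply/setP=> X; rewrite !inE subsetC sub1set !inE. Qed.

Lemma powerful_set0 S : powerful S -> set0 \in S.
Proof.
move=> pS; have [k below0] := pS set0.
have : 0 < #|below S set0| by rewrite below0 expn_gt0.
by case/card_gt0P=> Y; rewrite inE subset0 => /andP[YS /eqP <-].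
Qed.

Lemma card_contraction_rank S e : powerful S ->
  #|contraction S e| * 2 ^ rankS S [set e] = #|S|.
Proof.
move=> pS; have [a cardS] := pS setT; have [b cardC] := pS (~: [set e]).
rewrite below_setT in cardS.
have le_ba : b <= a.
  rewrite -(leq_exp2l _ _ (isT : 1 < 2)) -cardS -cardC subset_leq_card //.
  by apply/subsetP=> X; rewrite inE => /andP[].
by rewrite /rankS contraction_below cardC cardS expn_trunc_log_divn.
Qed.

Lemma card_deletion_coloop S e : coloop S e -> #|deletion S e| * 2 = #|S|.
Proof.
case=> T [eT ->]; set Te := [set X :|: [set e] | X in T].
have -> : deletion (T :|: Te) e = T.
  apply/setP=> X; rewrite !inE; apply/idP/idP => [/andP[eX] | XT]; last by rewrite eT // XT.
  case/or3P=> [/orP[// | /mem_imset_setUs1 eX'] | /eT | /imsetP[X' X'T eqX]].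
  - by rewrite eX' in eX.
  - by rewrite !inE eqxx orbT.
  - by rewrite -(setUs1K eX) eqX setUs1K ?eT.
have disjT : T :&: Te = set0.
  by apply/setP=> X; rewrite !inE; apply/negP=> /andP[/eT/negP eX /mem_imset_setUs1].
rewrite cardsU disjT cards0 subn0 card_in_imset ?muln2 ?addnn //.
by move=> X1 X2 /eT eX1 /eT eX2 eqX; rewrite -(setUs1K eX1) eqX setUs1K.
Qed.

Lemma coloop_closed S e :
  (forall X, e \notin X -> (X :|: [set e] \in S) = (X \in S)) -> coloop S e.
Proof.
move=> closedS; exists (contraction S e); split.
  by move=> X; rewrite inE => /andP[].
apply/setP=> Y; rewrite !inE; case: (boolP (e \in Y)) => eY; rewrite ?andbF ?andbT /=.
  have eY' : e \notin Y :\ e by rewrite !inE eqxx.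
  have YeK : Y :\ e :|: [set e] = Y by rewrite setUC setD1K.
  apply/idP/imsetP => [YS | [X]].
    by exists (Y :\ e); rewrite ?YeK // inE eY' andbT -closedS ?YeK.
  by rewrite inE => /andP[XS eX] ->; rewrite closedS.
case: (Y \in S) => //=; apply/esym/negP => /mem_imset_setUs1.
by rewrite (negbTE eY).
Qed.

Lemma deletion_imset S e : deletion S e = [set Y :\ e | Y in S].
Proof.
apply/setP=> X; rewrite !inE; apply/idP/imsetP => [/andP[eX /orP[XS | XeS]] | [Y YS ->]].
- by exists X; rewrite ?setD1_id.
- by exists (X :|: [set e]); rewrite ?setUs1K.
rewrite !inE eqxx /=; case: (boolP (e \in Y)) => eY; last by rewrite setD1_id ?YS.
by rewrite setUC setD1K ?YS ?orbT.
Qed.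

Lemma card_deletion_exclusive S e :
  (forall X, e \notin X -> X \in S -> X :|: [set e] \notin S) ->
  #|deletion S e| = #|S|.
Proof.
move=> exclS; rewrite deletion_imset.
apply: card_in_imset => Y1 Y2 Y1S Y2S eqY.
have mixed X Y : X \in S -> Y \in S -> X :\ e = Y :\ e -> e \in X -> e \notin Y -> False.
  move=> XS YS eqXY eX eY; have := exclS Y eY YS.
  by rewrite -(setD1_eq_setUs1 eqXY eX eY) XS.
case: (boolP (e \in Y1)) => eY1; case: (boolP (e \in Y2)) => eY2.
- by rewrite -(setD1K eY1) eqY setD1K.
- by case: (mixed Y1 Y2).
- by case: (mixed Y2 Y1).
- by rewrite -(setD1_id eY1) eqY setD1_id.
Qed.

Lemma gdel_set0 S e : set0 \in S -> gdel S e set0 = 1 + ([set e] \in S).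
Proof. by move=> S0; rewrite /gdel /indS S0 set0U. Qed.

Section Deletable.
Variables (S : {set {set E}}) (e : E).
Hypotheses (S0 : set0 \in S) (delS : deletable S e).

Lemma deletable_closed : [set e] \in S ->
  forall X, e \notin X -> (X :|: [set e] \in S) = (X \in S).
Proof.
move=> eS X eX; have := delS eX; rewrite gdel_set0 // eS /gdel /indS.
by case: (X \in S); case: (X :|: [set e] \in S); case.
Qed.

Lemma deletable_exclusive : [set e] \notin S ->
  forall X, e \notin X -> X \in S -> X :|: [set e] \notin S.
Proof.
move=> eS X eX; have := delS eX; rewrite gdel_set0 // (negbTE eS) /gdel /indS.
by case: (X \in S); case: (X :|: [set e] \in S); case.
Qed.

End Deletable.
End Powerful.

Theorem proposition4 (E : finType) (S : {set {set E}}) (e : E) :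
  powerful S ->
  #|contraction S e| * 2 ^ rankS S [set e] = #|S| /\
  (deletable S e ->
     (coloop S e -> #|deletion S e| * 2 = #|S|) /\
     (~ coloop S e -> #|deletion S e| = #|S|)).
Proof.
move=> pS; split; first exact: card_contraction_rank.
move=> delS; split; first exact: card_deletion_coloop.
move=> not_coloop; have S0 := powerful_set0 pS.
have eS : [set e] \notin S.
  by apply/negP=> eS; apply/not_coloop/coloop_closed/deletable_closed.
exact/card_deletion_exclusive/deletable_exclusive.
Qed.
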